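(* Let a system $u_{n+1,x}^j = F^j(x,n,u_{n,x}^j,u_n,u_{n+1})$, $j=1,\dots,N$, be the compatibility condition of the linear systems $$\Phi_{n+1}=U_n\Phi_n,\qquad \Phi_{n,x}=V_n\Phi_n,$$ i.e. $D_xU_n=V_{n+1}U_n-U_nV_n$ holds by virtue of the system, where $U_n=(a_{ik,n})$ is an $m\times m$ upper triangular matrix and $V_n=(b_{ik,n})$ is an $m\times m$ lower triangular matrix, with entries functions of the dynamical variables. For $k\ge0$ let $P^{(k)}_n=U_{n+k}U_{n+k-1}\cdots U_n$ and let $p^{(k)}_{1m,n}$ denote its entry in the first row and last column. If $D_nb_{11,n}=b_{11,n}$ and $b_{11,n}=b_{mm,n}$, then $J=p^{(k)}_{1m,n}$ is an $x$-integral of the system, i.e. $D_xJ=0$ by virtue of the system.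
   Context: The dynamical variables are $u^j_n,u^j_{n\pm1},\dots$ and $u^j_{n,x},u^j_{n,xx},\dots$, treated as independent; $D_n$ is the shift $D_ny(n)=y(n+1)$ and $D_x$ is the total $x$-derivative, with $x$-derivatives of shifted variables expressed through the system (and its converse form $u^j_{n-1,x}=G^j(x,n,u^j_{n,x},u_n,u_{n-1})$, assumed to exist). A function $J$ of $x,n$ and $u_n,u_{n\pm1},u_{n\pm2},\dots$ is called an $x$-integral if $D_xJ=0$ holds by virtue of the system. *)

From mathcomp Require Import all_boot all_order all_algebra.
Set Implicit Arguments. Unset Strict Implicit. Unset Printing Implicit Defensive.
Import GRing.Theory.
Local Open Scope ring_scope.

(* A (total x-) derivation on the ring A of functions of the dynamical
   variables, taken modulo the system ("by virtue of the system"). *)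
Definition is_derivation (A : comNzRingType) (Dx : A -> A) : Prop :=
  (forall a b : A, Dx (a + b) = Dx a + Dx b) /\
  (forall a b : A, Dx (a * b) = Dx a * b + a * Dx b).

Definition mx_Dx (A : comNzRingType) (Dx : A -> A) (m : nat) (M : 'M[A]_m) : 'M[A]_m :=
  map_mx Dx M.

(* the shift applied k times to every entry: U_n |-> U_{n+k} *)
Definition mx_shift (A : comNzRingType) (Dn : A -> A) (k : nat) (m : nat)
  (M : 'M[A]_m) : 'M[A]_m := map_mx (iter k Dn) M.

Definition upper_triangular (A : comNzRingType) (m : nat) (M : 'M[A]_m) : Prop :=
  forall i j : 'I_m, (j < i)%N -> M i j = 0.

Definition lower_triangular (A : comNzRingType) (m : nat) (M : 'M[A]_m) : Prop :=
  forall i j : 'I_m, (i < j)%N -> M i j = 0.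

(* P^{(k)}_n = U_{n+k} U_{n+k-1} ... U_n *)
Fixpoint Pk (A : comNzRingType) (Dn : A -> A) (m : nat) (U : 'M[A]_m) (k : nat)
  : 'M[A]_m :=
  match k with
  | 0 => U
  | k'.+1 => mx_shift Dn k'.+1 U *m Pk Dn U k'
  end.

Definition x_integral (A : comNzRingType) (Dx : A -> A) (J : A) : Prop := Dx J = 0.

From mathcomp Require Import all_boot all_order all_algebra.
Set Implicit Arguments. Unset Strict Implicit. Unset Printing Implicit Defensive.
Import GRing.Theory.
Local Open Scope ring_scope.

(* Each factor of P^(k)_n satisfies the zero-curvature equation
   D_x U_j = V_(j+1) U_j - U_j V_j, and these telescope along the product:
   D_x P^(k)_n = V_(n+k+1) P^(k)_n - P^(k)_n V_n.  Since V is lower triangular,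
   the (1,m) entry of the right-hand side is (b_11,n+k+1 - b_mm,n) p^(k)_1m,n,
   which vanishes because b_11 is shift invariant and equal to b_mm. *)

(* The shape of the compatibility condition D_x U_n = V_(n+1) U_n - U_n V_n. *)
Definition transports {A : comNzRingType} (Dx : A -> A) {m : nat}
  (L M R : 'M[A]_m) : Prop :=
  mx_Dx Dx M = L *m M - M *m R.

Section Derivation.
Context {A : comNzRingType} {Dx : A -> A}.

Lemma transports_corner m (L P R : 'M[A]_m.+1) :
  lower_triangular L -> lower_triangular R -> transports Dx L P R ->
  Dx (P ord0 ord_max) = (L ord0 ord0 - R ord_max ord_max) * P ord0 ord_max.
Proof.
move=> lowL lowR /matrixP/(_ ord0 ord_max); rewrite !mxE => ->.
rewrite (bigD1 ord0) // big1 => [|i i_neq0]; last first.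
  by rewrite lowL ?mul0r // lt0n.
rewrite (bigD1 ord_max) // [X in _ - (_ + X)]big1 => [|i i_neq_max].
  by rewrite mulrBl [P _ _ * _]mulrC !Monoid.simpm.
by rewrite lowR ?mulr0 // ltn_neqAle -ltnS ltn_ord andbT.
Qed.

Hypothesis derDx : is_derivation Dx.

Lemma derivation0 : Dx 0 = 0.
Proof.
case: derDx => DxD _.
by apply: (addrI (Dx 0)); rewrite -DxD !addr0.
Qed.

Lemma mx_Dx_mul m (M N : 'M[A]_m) :
  mx_Dx Dx (M *m N) = mx_Dx Dx M *m N + M *m mx_Dx Dx N.
Proof.
case: derDx => DxD DxM.
apply/matrixP => i j; rewrite !mxE (big_morph Dx DxD derivation0) -big_split.
by apply: eq_bigr => l _; rewrite !mxE DxM.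
Qed.

Lemma transports_mul m (L X R Y S : 'M[A]_m) :
  transports Dx L X R -> transports Dx R Y S -> transports Dx L (X *m Y) S.
Proof.
rewrite /transports mx_Dx_mul => -> ->.
by rewrite mulmxBl mulmxBr !mulmxA addrA subrK.
Qed.

End Derivation.

Section Shift.
Context {A : comNzRingType} (Dn : {rmorphism A -> A}).

Lemma mx_shift0 m (M : 'M[A]_m) : mx_shift Dn 0 M = M.
Proof. by rewrite /mx_shift map_mx_id. Qed.

Lemma mx_shiftS j m (M : 'M[A]_m) :
  mx_shift Dn j.+1 M = map_mx Dn (mx_shift Dn j M).
Proof. by rewrite /mx_shift -map_mx_comp. Qed.

Lemma mx_shift_add i j m (M : 'M[A]_m) :
  mx_shift Dn i (mx_shift Dn j M) = mx_shift Dn (i + j) M.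
Proof. by apply/matrixP => r c; rewrite !mxE iterD. Qed.

Lemma mx_shiftM j m (M N : 'M[A]_m) :
  mx_shift Dn j (M *m N) = mx_shift Dn j M *m mx_shift Dn j N.
Proof. by elim: j => [|j IH]; rewrite ?mx_shift0 // !mx_shiftS IH map_mxM. Qed.

Lemma mx_shiftB j m (M N : 'M[A]_m) :
  mx_shift Dn j (M - N) = mx_shift Dn j M - mx_shift Dn j N.
Proof. by elim: j => [|j IH]; rewrite ?mx_shift0 // !mx_shiftS IH map_mxB. Qed.

Lemma lower_triangular_shift j m (M : 'M[A]_m) :
  lower_triangular M -> lower_triangular (mx_shift Dn j M).
Proof.
move=> lowM r c lt_rc; rewrite mxE lowM //.
by elim: j => [|j IH] //=; rewrite IH rmorph0.
Qed.

Lemma mx_Dx_shift (Dx : A -> A) j m (M : 'M[A]_m) :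
  (forall a, Dx (Dn a) = Dn (Dx a)) ->
  mx_Dx Dx (mx_shift Dn j M) = mx_shift Dn j (mx_Dx Dx M).
Proof.
move=> DxDn; apply/matrixP => r c; rewrite !mxE.
by elim: j => [|j IH] //=; rewrite DxDn IH.
Qed.

End Shift.

Section LaxPair.
Context {A : comNzRingType} {Dx : A -> A} (Dn : {rmorphism A -> A}).
Context {m : nat} {U V : 'M[A]_m}.
Hypothesis derDx : is_derivation Dx.
Hypothesis DxDn : forall a, Dx (Dn a) = Dn (Dx a).
Hypothesis zero_curvature : transports Dx (mx_shift Dn 1 V) U V.

Lemma transports_shift j :
  transports Dx (mx_shift Dn j.+1 V) (mx_shift Dn j U) (mx_shift Dn j V).
Proof.
rewrite /transports mx_Dx_shift // zero_curvature mx_shiftB !mx_shiftM.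
by rewrite mx_shift_add addn1.
Qed.

Lemma transports_Pk k : transports Dx (mx_shift Dn k.+1 V) (Pk Dn U k) V.
Proof.
elim: k => [|k IH] //=.
exact: transports_mul (transports_shift k.+1) IH.
Qed.

End LaxPair.

Theorem lemma4 (A : comNzRingType) (Dx : A -> A) (Dn : {rmorphism A -> A})
  (m : nat) (U V : 'M[A]_m.+1) :
  is_derivation Dx ->
  bijective Dn ->
  (forall a : A, Dx (Dn a) = Dn (Dx a)) ->
  upper_triangular U ->
  lower_triangular V ->
  mx_Dx Dx U = mx_shift Dn 1 V *m U - U *m V ->
  Dn (V ord0 ord0) = V ord0 ord0 ->
  V ord0 ord0 = V ord_max ord_max ->
  forall k : nat, x_integral Dx (Pk Dn U k ord0 ord_max).
Proof.
move=> derDx _ DxDn _ lowV zero_curvature Dn_V00 V00_Vmm k.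
have lowVk := lower_triangular_shift Dn k.+1 lowV.
rewrite /x_integral (transports_corner lowVk lowV).
  by rewrite mxE iter_fix // V00_Vmm subrr mul0r.
exact: transports_Pk.
Qed.
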